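(* Let $\mathbf A\in\mathbb R^{n\times p}$ have columns $\mathbf a_1,\dots,\mathbf a_p$ normalized to a common norm, $\|\mathbf a_k\|_2=c$ for $k=1,\dots,p$, and let $\mathbf y\in\mathbb R^n$. Let $\mathbf w$ be a weight vector as in the context and $\Delta:=\min\{w_l-w_{l+1}: l=1,\dots,p-1\}$. Let $\widehat{\mathbf x}$ be any minimizer of $$\frac12\|\mathbf A\mathbf x-\mathbf y\|_2^2+\Omega_{\mathbf w}(\mathbf x)$$ over $\mathbf x\in\mathbb R^p$. Then for every pair of columns $(i,j)$ for which $\|\mathbf y\|_2\,\|\operatorname{sign}(\widehat x_i)\mathbf a_i-\operatorname{sign}(\widehat x_j)\mathbf a_j\|_2<\Delta$, we have $|\widehat x_i|=|\widehat x_j|$.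
   Context: $\mathbf w=(w_1,\dots,w_p)\in\mathbb R^p_+$ satisfies $w_1\ge w_2\ge\cdots\ge w_p\ge0$ and $w_1>0$. The ordered weighted $\ell_1$ (OWL) norm is $\Omega_{\mathbf w}(\mathbf x)=\sum_{i=1}^p w_i|x|_{[i]}$, where $|x|_{[i]}$ denotes the $i$-th largest component of $\mathbf x$ in magnitude. $\operatorname{sign}$ denotes the sign function. *)

From HB Require Import structures.
From mathcomp Require Import all_boot all_order all_algebra.
Set Implicit Arguments. Unset Strict Implicit. Unset Printing Implicit Defensive.
Import Order.TTheory GRing.Theory Num.Theory.
Local Open Scope ring_scope.

Definition l2norm (R : rcfType) (m : nat) (v : 'cV[R]_m) : R :=
  Num.sqrt (\sum_(i < m) v i 0 ^+ 2).

(* magnitudes of the entries of x, sorted in nonincreasing order: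
   (sorted_abs x)`_i = |x|_[i+1] *)
Definition sorted_abs (R : rcfType) (m : nat) (x : 'cV[R]_m) : seq R :=
  sort (fun a b : R => b <= a) [seq `|x i 0| | i <- enum 'I_m].

Definition owl (R : rcfType) (m : nat) (w : 'I_m -> R) (x : 'cV[R]_m) : R :=
  \sum_(i < m) w i * (sorted_abs x)`_i.

Definition owl_obj (R : rcfType) (n m : nat) (A : 'M[R]_(n, m)) (y : 'cV[R]_n)
  (w : 'I_m -> R) (x : 'cV[R]_m) : R :=
  2^-1 * l2norm (A *m x - y) ^+ 2 + owl w x.

(* weights indexed by 'I_p.+1 (paper's p is p.+1 here).
   Delta = min_{l = 1..p} (w_l - w_{l+1}); the seed w_1 of the fold does not
   change the value when p >= 1 since w_l - w_{l+1} <= w_1 - w_{p+1} <= w_1. *)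
Definition owl_gap (R : rcfType) (p : nat) (w : 'I_p.+1 -> R) : R :=
  \big[Num.min/w ord0]_(l < p) (w (widen_ord (leqnSn p) l) - w (lift ord0 l)).

From mathcomp Require Import all_boot all_order all_algebra all_fingroup.
From mathcomp Require Import ring lra zify.
Import Order.TTheory GRing.Theory Num.Theory.
Set Implicit Arguments. Unset Strict Implicit. Unset Printing Implicit Defensive.
Local Open Scope ring_scope.

(* If |x_j| < |x_i| at a minimizer x, move a small amount e of magnitude from
   coordinate i to coordinate j, taking it from the last slot of |x_i| in the
   sorted magnitudes and giving it to the first slot of |x_j|.  The sorted order
   survives, so the OWL penalty drops by e (w_ri - w_rj) >= e Delta.  The data
   term grows by e <A x - y, D> + O(e^2), where the direction D is
   -(sign(x_i) a_i - sign(x_j) a_j) (when x_j = 0 the sign given to a_j is chosen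
   against the residual), and <A x - y, D> <= |y| |D| because the residual of a
   minimizer is no longer than y.  So for small e the objective decreases. *)

Section Euclidean.
Variables (R : rcfType) (n : nat).
Implicit Types (u v : 'cV[R]_n) (e : R).

Definition vdot u v : R := \sum_(k < n) u k 0 * v k 0.
Definition sqnorm v : R := \sum_(k < n) v k 0 ^+ 2.

Lemma sqnorm_ge0 v : 0 <= sqnorm v.
Proof. by apply: sumr_ge0 => k _; apply: sqr_ge0. Qed.

Lemma l2norm_ge0 v : 0 <= l2norm v.
Proof. exact: sqrtr_ge0. Qed.

Lemma l2norm_sqr v : l2norm v ^+ 2 = sqnorm v.
Proof. by rewrite sqr_sqrtr // sqnorm_ge0. Qed.

Lemma sqnormN v : sqnorm (- v) = sqnorm v.
Proof. by apply: eq_bigr => k _; rewrite mxE sqrrN. Qed.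

Lemma l2normN v : l2norm (- v) = l2norm v.
Proof. by rewrite /l2norm -/(sqnorm _) sqnormN. Qed.

Lemma sqnormDZ u v e :
  sqnorm (u + e *: v) = sqnorm u + 2 * e * vdot u v + e ^+ 2 * sqnorm v.
Proof.
rewrite /sqnorm /vdot !mulr_sumr -!big_split /=.
by apply: eq_bigr => k _; rewrite !mxE; ring.
Qed.

Lemma sqnorm_eq0 v : sqnorm v = 0 -> forall k, v k 0 = 0.
Proof.
move=> v0 k; apply/eqP; rewrite -sqrf_eq0; apply/eqP.
exact: (psumr_eq0P (fun k _ => sqr_ge0 (v k 0)) v0).
Qed.

Lemma cauchy_schwarz u v : `|vdot u v| <= l2norm u * l2norm v.
Proof.
rewrite -[X in X <= _]sqrtr_sqr /l2norm -sqrtrM ?sqnorm_ge0 //.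
apply: ler_wsqrtr; rewrite -/(sqnorm u) -/(sqnorm v).
have [v0|v_neq0] := eqVneq (sqnorm v) 0.
  rewrite v0 mulr0 /vdot big1 ?expr0n // => k _.
  by rewrite (sqnorm_eq0 v0) mulr0.
have v_gt0 : 0 < sqnorm v by rewrite lt_def v_neq0 sqnorm_ge0.
rewrite -subr_ge0.
suff -> : sqnorm u * sqnorm v - vdot u v ^+ 2
          = sqnorm v * sqnorm (u + (- (vdot u v / sqnorm v)) *: v).
  by rewrite mulr_ge0 ?sqnorm_ge0.
by rewrite sqnormDZ; field.
Qed.

End Euclidean.

Section SortedAbs.
Variables (R : rcfType) (m : nat).
Implicit Types (x : 'cV[R]_m) (pi : 'S_m).

Local Notation ger := (fun a b : R => b <= a).

Lemma ger_total : total ger.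
Proof. by move=> a b; rewrite orbC le_total. Qed.

Lemma ger_trans : transitive ger.
Proof. by move=> a b c /= ba cb; apply: le_trans cb ba. Qed.

Lemma ger_anti : antisymmetric ger.
Proof. by move=> a b /andP[ba ab]; apply/eqP; rewrite eq_le ab ba. Qed.

Lemma nth_map_enum_ord (T : Type) (f : 'I_m -> T) (x0 : T) (k : 'I_m) :
  nth x0 [seq f i | i <- enum 'I_m] k = f k.
Proof. by rewrite (nth_map k) ?size_enum_ord // nth_ord_enum. Qed.

Lemma size_sorted_abs x : size (sorted_abs x) = m.
Proof. by rewrite size_sort size_map size_enum_ord. Qed.

Lemma sorted_abs_nonincr x (k l : nat) :
  (k <= l)%N -> (l < m)%N -> (sorted_abs x)`_l <= (sorted_abs x)`_k.
Proof.
move=> kl lm; apply: (sorted_leq_nth ger_trans (fun a => lexx a)) => //;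
  rewrite ?(sort_sorted ger_total) // inE size_sorted_abs //.
exact: leq_ltn_trans lm.
Qed.

Lemma sorted_abs_perm x : exists pi, forall k : 'I_m, (sorted_abs x)`_k = `|x (pi k) 0|.
Proof.
have : perm_eq (sorted_abs x) [tuple `|x i 0| | i < m] by rewrite perm_sort.
case/tuple_permP => pi ->; exists pi => k.
by rewrite -tnth_nth !tnth_mktuple.
Qed.

Lemma sorted_abs_index x (i : 'I_m) : exists k : 'I_m, (sorted_abs x)`_k = `|x i 0|.
Proof. by have [pi hpi] := sorted_abs_perm x; exists (pi^-1 i)%g; rewrite hpi permKV. Qed.

Lemma sorted_abs_ge0 x k : 0 <= (sorted_abs x)`_k.
Proof.
have [km|mk] := ltnP k m; last by rewrite nth_default ?size_sorted_abs.
have [pi hpi] := sorted_abs_perm x.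
by rewrite -[k]/(nat_of_ord (Ordinal km)) hpi.
Qed.

Lemma sorted_abs_perm2 x (i j ri rj : 'I_m) : i != j -> ri != rj ->
  (sorted_abs x)`_ri = `|x i 0| -> (sorted_abs x)`_rj = `|x j 0| ->
  exists pi, [/\ pi ri = i, pi rj = j &
                 forall k : 'I_m, (sorted_abs x)`_k = `|x (pi k) 0|].
Proof.
move=> ij rij ri_i rj_j; have [pi0 hpi0] := sorted_abs_perm x.
have tpermJ pi (r l : 'I_m) : (forall k : 'I_m, (sorted_abs x)`_k = `|x (pi k) 0|) ->
    (sorted_abs x)`_r = `|x l 0| ->
    forall k : 'I_m, (sorted_abs x)`_k = `|x ((pi * tperm l (pi r))%g k) 0|.
  move=> hpi hr k; rewrite permM hpi.
  by case: tpermP => // ->; rewrite -hpi.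
set pi1 := (pi0 * tperm j (pi0 rj))%g.
set pi := (pi1 * tperm i (pi1 ri))%g.
have pi1rj : pi1 rj = j by rewrite permM tpermR.
exists pi; split; first by rewrite permM tpermR.
- by rewrite permM pi1rj tpermD // -pi1rj (inj_eq perm_inj).
- exact: tpermJ _ _ _ (tpermJ _ _ _ hpi0 rj_j) ri_i.
Qed.

Lemma sorted_abs_eq x pi :
  sorted ger [seq `|x (pi k) 0| | k <- enum 'I_m] ->
  sorted_abs x = [seq `|x (pi k) 0| | k <- enum 'I_m].
Proof.
move=> srt; rewrite /sorted_abs -[RHS](sorted_sort ger_trans srt).
apply/(perm_sortP ger_total ger_trans ger_anti).
rewrite perm_sym (map_comp (fun i => `|x i 0|) pi); apply: perm_map.
apply: uniq_perm; last 2 first.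
- exact: enum_uniq.
- by move=> i; rewrite mem_enum -[i](permKV pi) map_f ?mem_enum.
by rewrite map_inj_uniq ?enum_uniq //; exact: perm_inj.
Qed.

End SortedAbs.

Section NonincreasingTransfer.
Variable R : rcfType.

Definition nonincr_upto (m : nat) (s : nat -> R) :=
  forall k l, (k <= l)%N -> (l < m)%N -> s l <= s k.

Lemma nonincr_plateau_ends m (s : nat -> R) (k1 k2 : 'I_m) :
  nonincr_upto m s -> s k2 < s k1 ->
  exists ri rj : 'I_m, [/\ (ri < rj)%N, s ri = s k1, s rj = s k2,
                           s ri.+1 < s k1 & s k2 < s rj.-1].
Proof.
move=> sdec k21.
have [ri /eqP ri_k1 ri_max] := @arg_maxnP _ k1 (fun k : 'I_m => s k == s k1) val (eqxx _).
have [rj /eqP rj_k2 rj_min] := @arg_minnP _ k2 (fun k : 'I_m => s k == s k2) val (eqxx _).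
have rij : (ri < rj)%N.
  by rewrite ltnNge; apply/negP => /sdec /(_ (ltn_ord ri)); rewrite ri_k1 rj_k2; lra.
exists ri, rj; split => //.
- have ri1m : (ri.+1 < m)%N by apply: leq_ltn_trans rij (ltn_ord rj).
  rewrite lt_def -ri_k1 sdec ?leqnSn // andbT.
  apply/eqP => ri1_k1; have := ri_max (Ordinal ri1m).
  by rewrite /= -ri1_k1 ri_k1 eqxx ltnn => /(_ isT).
- have rj_gt0 : (0 < rj)%N by apply: leq_ltn_trans rij.
  have rj1m : (rj.-1 < m)%N by apply: leq_ltn_trans (leq_pred _) (ltn_ord rj).
  rewrite lt_def -rj_k2 sdec ?leq_pred // andbT.
  apply/eqP => rj1_k2; have := rj_min (Ordinal rj1m).
  by rewrite /= rj1_k2 rj_k2 eqxx -ltnS prednK // ltnn => /(_ isT).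
Qed.

Lemma nonincr_transfer m (s f : nat -> R) (ri rj : nat) (e : R) :
  nonincr_upto m s -> (ri < rj)%N -> (rj < m)%N ->
  f ri = s ri - e -> f rj = s rj + e ->
  (forall k, (k < m)%N -> k != ri -> k != rj -> f k = s k) ->
  0 <= e -> e + e <= s ri - s rj ->
  e <= s ri - s ri.+1 -> e <= s rj.-1 - s rj ->
  nonincr_upto m f.
Proof.
move=> sdec rij rjm fri frj fk e0 e_ab e_ri e_rj.
suff fS k : (k.+1 < m)%N -> f k.+1 <= f k.
  move=> k l /subnK <-; elim: (l - k)%N => [|d IHd] lm //.
  apply: le_trans (IHd (ltnW lm)); exact: fS.
move=> km; have km' := ltnW km.
have sS : s k.+1 <= s k by apply: sdec.
have [kri | kri] := eqVneq k ri.
  subst k; have [-> | rij'] := eqVneq ri.+1 rj; first by rewrite fri frj; lra.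
  by rewrite fri fk //; try lia; lra.
have [krj | krj] := eqVneq k rj.
  by subst k; rewrite frj fk //; try lia; lra.
rewrite [f k]fk //.
have [kri' | kri'] := eqVneq k.+1 ri; first by rewrite kri' fri -kri'; lra.
have [krj' | krj'] := eqVneq k.+1 rj; last by rewrite fk.
by move: e_rj; rewrite krj' frj -krj' /=; lra.
Qed.

End NonincreasingTransfer.

Section OrderedWeightedL1.
Variables (R : rcfType) (m : nat) (w : 'I_m -> R).
Implicit Types (x : 'cV[R]_m).

Lemma owl_ge0 x : (forall i, 0 <= w i) -> 0 <= owl w x.
Proof. by move=> w_ge0; apply: sumr_ge0 => i _; rewrite mulr_ge0 ?sorted_abs_ge0. Qed.

Lemma owl0 : owl w 0 = 0.
Proof.
have [pi hpi] := sorted_abs_perm (0 : 'cV[R]_m).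
by apply: big1 => i _; rewrite hpi mxE normr0 mulr0.
Qed.

Lemma owl_transfer (x xt : 'cV[R]_m) (i j ri rj : 'I_m) (e : R) :
  i != j -> (ri < rj)%N ->
  (sorted_abs x)`_ri = `|x i 0| -> (sorted_abs x)`_rj = `|x j 0| ->
  0 <= e -> e + e <= `|x i 0| - `|x j 0| ->
  e <= `|x i 0| - (sorted_abs x)`_ri.+1 -> e <= (sorted_abs x)`_rj.-1 - `|x j 0| ->
  `|xt i 0| = `|x i 0| - e -> `|xt j 0| = `|x j 0| + e ->
  (forall k, k != i -> k != j -> `|xt k 0| = `|x k 0|) ->
  owl w xt = owl w x - e * (w ri - w rj).
Proof.
move=> ij rij ri_i rj_j e0 e_ab e_ri e_rj xt_i xt_j xt_k.
have ri_rj : ri != rj by rewrite neq_ltn rij.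
have [pi [pi_ri pi_rj hpi]] := sorted_abs_perm2 ij ri_rj ri_i rj_j.
set s := sorted_abs x; set t := [seq `|xt (pi k) 0| | k <- enum 'I_m].
have t_other (k : 'I_m) : k != ri -> k != rj -> t`_k = s`_k.
  move=> kri krj; rewrite nth_map_enum_ord hpi xt_k //.
  - by rewrite -pi_ri (inj_eq perm_inj).
  - by rewrite -pi_rj (inj_eq perm_inj).
have t_ri : t`_ri = s`_ri - e by rewrite nth_map_enum_ord pi_ri xt_i ri_i.
have t_rj : t`_rj = s`_rj + e by rewrite nth_map_enum_ord pi_rj xt_j rj_j.
have t_nonincr : nonincr_upto m (nth 0 t).
  apply: (nonincr_transfer (s := nth 0 s)) t_ri t_rj _ e0 _ _ _ => //;
    rewrite ?ri_i ?rj_j //; first exact: sorted_abs_nonincr.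
  by move=> k km; apply: (t_other (Ordinal km)).
have sorted_xt : sorted_abs xt = t.
  apply: sorted_abs_eq; apply/(sortedP 0) => k.
  by rewrite size_map size_enum_ord => km; apply: t_nonincr.
have -> : owl w xt = owl w x + \sum_(k < m) w k * (t`_k - s`_k).
  by rewrite /owl sorted_xt -big_split; apply: eq_bigr => k _ /=; ring.
rewrite (bigD1 ri) // (bigD1 rj) 1?eq_sym //= big1 ?t_ri ?t_rj; first ring.
by move=> k /andP[kri krj]; rewrite t_other // subrr mulr0.
Qed.

End OrderedWeightedL1.

Lemma owl_gap_le (R : rcfType) (p : nat) (w : 'I_p.+1 -> R) (ri rj : 'I_p.+1) :
  (forall i j : 'I_p.+1, (i <= j)%N -> w j <= w i) -> (ri < rj)%N ->
  owl_gap w <= w ri - w rj.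
Proof.
move=> w_mono rij.
have ri_p : (ri < p)%N by rewrite -ltnS; apply: leq_trans rij (ltn_ord rj).
apply: le_trans (bigmin_le _ (Ordinal ri_p) _) _.
have -> : widen_ord (leqnSn p) (Ordinal ri_p) = ri by apply: val_inj.
by rewrite lerD2l lerN2 w_mono.
Qed.

Section Descent.
Variable R : rcfType.

Lemma sign_choice (a q : R) :
  exists s : R, [/\ `|s| = 1, a != 0 -> s = Num.sg a & (s - Num.sg a) * q <= 0].
Proof.
have [-> | a0] := eqVneq a 0; last by exists (Num.sg a); rewrite normr_sg a0 subrr mul0r.
have [q0 | q0] := lerP 0 q.
- by exists (-1); rewrite normrN normr1 sgr0 subr0 mulN1r oppr_le0.
- by exists 1; rewrite normr1 sgr0 subr0 mul1r ltW.
Qed.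

Lemma normr_sub_sg (a e : R) : a != 0 -> e <= `|a| -> `|a - e * Num.sg a| = `|a| - e.
Proof.
move=> a0 ea; rewrite {1}(numEsg a) [e * _]mulrC -mulrBr normrM normr_sg a0 mul1r.
by rewrite ger0_norm ?subr_ge0.
Qed.

Lemma normr_add_unit (a e s : R) : 0 <= e -> `|s| = 1 -> (a != 0 -> s = Num.sg a) ->
  `|a + e * s| = `|a| + e.
Proof.
move=> e0 s1 s_sg; have [-> | a0] := eqVneq a 0.
  by rewrite add0r normr0 add0r normrM s1 mulr1 ger0_norm.
rewrite s_sg // {1}(numEsg a) [e * _]mulrC -mulrDr normrM normr_sg a0 mul1r.
by rewrite ger0_norm // addr_ge0.
Qed.

Lemma small_step_gain (P N W e0 : R) : 0 < e0 -> P < W -> 0 <= N ->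
  exists2 e, 0 < e <= e0 & e * P + e ^+ 2 / 2 * N < e * W.
Proof.
move=> e0_gt0 PW N0; set e := Num.min e0 ((W - P) / (N + 1)).
have N1 : 0 < N + 1 by rewrite ltr_wpDl.
have e_gt0 : 0 < e by rewrite lt_min e0_gt0 divr_gt0 ?subr_gt0.
have eN : e * N < W - P.
  have : e * (N + 1) <= W - P by rewrite -ler_pdivlMr // ge_min lexx orbT.
  by rewrite mulrDr mulr1; lra.
exists e; first by rewrite e_gt0 ge_min lexx.
have : 0 < e * (W - P - e * N / 2) by rewrite mulr_gt0 //; lra.
rewrite expr2; lra.
Qed.

End Descent.

Section TransferDirection.
Variables (R : rcfType) (m : nat) (x : 'cV[R]_m) (i j : 'I_m) (s e : R).
Hypotheses (ij : i != j) (s1 : `|s| = 1) (s_sg : x j 0 != 0 -> s = Num.sg (x j 0)).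

Definition transfer_dir : 'cV[R]_m := s *: delta_mx j 0 - Num.sg (x i 0) *: delta_mx i 0.

Lemma transfer_dirE k :
  (x + e *: transfer_dir) k 0
  = x k 0 + e * (s * (k == j)%:R - Num.sg (x i 0) * (k == i)%:R).
Proof. by rewrite !mxE !eqxx !andbT. Qed.

Lemma transfer_step_abs : x i 0 != 0 -> 0 <= e <= `|x i 0| ->
  let xt := x + e *: transfer_dir in
  [/\ `|xt i 0| = `|x i 0| - e, `|xt j 0| = `|x j 0| + e &
      forall k, k != i -> k != j -> `|xt k 0| = `|x k 0| ].
Proof.
move=> xi0 /andP[e0 exi] xt; split.
- by rewrite transfer_dirE eqxx (negbTE ij) mulr0 sub0r mulr1 mulrN normr_sub_sg.
- rewrite transfer_dirE eqxx eq_sym (negbTE ij) mulr0 subr0 mulr1.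
  exact: normr_add_unit.
- by move=> k ki kj; rewrite transfer_dirE (negbTE ki) (negbTE kj) !mulr0 subrr mulr0 addr0.
Qed.

End TransferDirection.

Lemma owl_objE (R : rcfType) n m (A : 'M[R]_(n, m)) y w x :
  owl_obj A y w x = 2^-1 * sqnorm (A *m x - y) + owl w x.
Proof. by rewrite /owl_obj l2norm_sqr. Qed.

Section Minimizer.
Variables (R : rcfType) (n p : nat) (A : 'M[R]_(n, p.+1)) (y : 'cV[R]_n).
Variables (w : 'I_p.+1 -> R) (x : 'cV[R]_p.+1).
Hypotheses (w_mono : forall i j : 'I_p.+1, (i <= j)%N -> w j <= w i)
           (w_ge0 : forall i, 0 <= w i)
           (x_min : forall x', owl_obj A y w x <= owl_obj A y w x').

Lemma minimizer_residual_le : l2norm (A *m x - y) <= l2norm y.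
Proof.
have := x_min 0; rewrite !owl_objE owl0 mulmx0 sub0r addr0 sqnormN => le_y.
apply: ler_wsqrtr; rewrite -/(sqnorm _) -/(sqnorm y).
have := owl_ge0 x w_ge0; lra.
Qed.

Lemma minimizer_transfer_slope (i j : 'I_p.+1) (s : R) :
  (s - Num.sg (x j 0)) * vdot (A *m x - y) (col j A) <= 0 ->
  vdot (A *m x - y) (A *m transfer_dir x i j s)
    <= l2norm y * l2norm (Num.sg (x i 0) *: col i A - Num.sg (x j 0) *: col j A).
Proof.
set g := A *m x - y; set V := Num.sg (x i 0) *: col i A - _ => sQ.
have -> : vdot g (A *m transfer_dir x i j s)
          = - vdot g V + (s - Num.sg (x j 0)) * vdot g (col j A).
  rewrite /vdot mulr_sumr -sumrN -big_split /= /transfer_dir mulmxBr -!scalemxAr -!colE.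
  by apply: eq_bigr => k _; rewrite !mxE; ring.
have gV : l2norm g * l2norm V <= l2norm y * l2norm V.
  by rewrite ler_wpM2r ?l2norm_ge0 ?minimizer_residual_le.
have := cauchy_schwarz g V; have := ler_norm (- vdot g V); rewrite normrN.
lra.
Qed.

Lemma minimizer_abs_le (i j : 'I_p.+1) :
  l2norm y * l2norm (Num.sg (x i 0) *: col i A - Num.sg (x j 0) *: col j A)
    < owl_gap w ->
  `|x i 0| <= `|x j 0|.
Proof.
set V := _ - _; move=> yV_gap; rewrite leNgt; apply/negP => ji.
have ij : i != j by apply: contraTneq ji => ->; rewrite ltxx.
have xi0 : x i 0 != 0 by rewrite -normr_gt0; apply: le_lt_trans ji.
set g := A *m x - y.
have [s [s1 s_sg sQ]] := sign_choice (x j 0) (vdot g (col j A)).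
set d := transfer_dir x i j s; set D := A *m d.
have slope_le : vdot g D <= l2norm y * l2norm V := minimizer_transfer_slope i sQ.
have [k1 k1_i] := sorted_abs_index x i; have [k2 k2_j] := sorted_abs_index x j.
have [ri [rj [rij ri_i rj_j ri_gap rj_gap]]] :=
  nonincr_plateau_ends (s := nth 0 (sorted_abs x)) (k1 := k1) (k2 := k2)
    (@sorted_abs_nonincr _ _ x) (ltac:(by rewrite k1_i k2_j)).
rewrite {}k1_i {}k2_j in ri_i rj_j ri_gap rj_gap.
set a := `|x i 0| in ji ri_i ri_gap *; set b := `|x j 0| in ji rj_j rj_gap *.
have step_gt0 : 0 < Num.min ((a - b) / 2)
                  (Num.min (a - (sorted_abs x)`_ri.+1) ((sorted_abs x)`_rj.-1 - b)).
  by rewrite !lt_min !subr_gt0 ri_gap rj_gap divr_gt0 ?subr_gt0.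
have slope_lt : vdot g D < w ri - w rj.
  exact: le_lt_trans slope_le (lt_le_trans yV_gap (owl_gap_le w_mono rij)).
have [e /andP[e_gt0]] := small_step_gain step_gt0 slope_lt (sqnorm_ge0 D).
rewrite !le_min => /and3P[e_ab e_ri e_rj] gain.
have e_a : 0 <= e <= a.
  by rewrite ltW //=; have : 0 <= b := normr_ge0 _; lra.
have [xt_i xt_j xt_k] := @transfer_step_abs _ _ x i j s e ij s1 s_sg xi0 e_a.
have e_ab2 : e + e <= a - b by lra.
have owl_step := owl_transfer w ij rij ri_i rj_j (ltW e_gt0) e_ab2 e_ri e_rj xt_i xt_j xt_k.
have residual_step : A *m (x + e *: d) - y = g + e *: D.
  by rewrite mulmxDr -scalemxAr addrAC.
have := x_min (x + e *: d).
rewrite !owl_objE residual_step owl_step (sqnormDZ g D e).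
lra.
Qed.

End Minimizer.

Theorem theorem2 (R : rcfType) (n p : nat) (A : 'M[R]_(n, p.+1)) (y : 'cV[R]_n)
  (c : R) (hcol : forall k : 'I_p.+1, l2norm (col k A) = c)
  (w : 'I_p.+1 -> R)
  (hw_mono : forall i j : 'I_p.+1, (i <= j)%N -> w j <= w i)
  (hw_nneg : forall i : 'I_p.+1, 0 <= w i)
  (hw_pos : 0 < w ord0)
  (xhat : 'cV[R]_p.+1)
  (hmin : forall x : 'cV[R]_p.+1, owl_obj A y w xhat <= owl_obj A y w x) :
  forall i j : 'I_p.+1,
    l2norm y * l2norm (Num.sg (xhat i 0) *: col i A - Num.sg (xhat j 0) *: col j A)
      < owl_gap w ->
    `|xhat i 0| = `|xhat j 0|.
Proof.
move=> i j gap; apply/eqP; rewrite eq_le (minimizer_abs_le hw_mono hw_nneg hmin gap).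
by apply: (minimizer_abs_le hw_mono hw_nneg hmin); rewrite -opprB l2normN.
Qed.
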